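(* Let $I\subset\mathbb R$ be an open interval, $f:I\to\mathbb R$ continuously differentiable, and $p^*\in I$ with $f(p^* )=0$ and $f'(p^* )\ne0$. Let $\eta\in(0,1)$ and $\zeta\in(\eta,1)$. Then there exists $\epsilon>0$ with the following property. Let $(p_n)_{n\ge0}$, $(F_n)_{n\ge0}$, $(F'_n)_{n\ge0}$ be real sequences with $F'_n\ne0$, $p_{n+1}=p_n-F_n/F'_n$ for all $n$, $|p_0-p^*|\le\epsilon$, and such that for every $n$ with $p_n\in I$, $$2|F_n-f(p_n)|+|\Delta p_n|\,|F'_n-f'(p_n)|\le\eta|F_n|,\qquad \Delta p_n:=p_{n+1}-p_n.$$ Then $|p_n-p^*|\le\epsilon$ and $|p_{n+1}-p^*|\le\zeta|p_n-p^*|$ for all $n\ge0$; in particular $p_n\to p^*$. *)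

From Stdlib Require Import Reals.
Open Scope R_scope.

(* An open interval of R, with possibly infinite endpoints:
   None as lower endpoint means -oo, None as upper endpoint means +oo. *)
Definition in_open_interval (lo hi : option R) (x : R) : Prop :=
  match lo with Some a => a < x | None => True end /\
  match hi with Some b => x < b | None => True end.

(** Near a simple root [|f'(x) - a| <= k |a|] with [a := f'(pstar)], where [k := (zeta - eta) / (2 + eta + zeta)].  Writing
    [e := p - pstar], [d := Δp] and [f(p) = f'(ξ) e] (mean value theorem), the
    Newton relation [F + F' d = 0] gives
    [f'(p) (e + d) = (f'(p) - f'(ξ)) e + (f(p) - F) - (F' - f'(p)) d],
    and the accuracy condition bounds the last two terms by [eta |f(p)|].
    Hence [(1 - k)|a| |e + d| <= (2k + eta (1 + k)) |a| |e| <= zeta (1 - k) |a| |e|]: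
    each step contracts the error by [zeta], so the iterates never leave the
    neighbourhood and converge geometrically. *)

From Stdlib Require Import Reals Lra Psatz.
Open Scope R_scope.

Lemma Rabs_newton_error (e d F F' fx fpx fpxi : R) :
  F + F' * d = 0 -> fx = fpxi * e ->
  Rabs fpx * Rabs (e + d) <=
    Rabs (fpx - fpxi) * Rabs e + Rabs (F - fx) + Rabs d * Rabs (F' - fpx).
Proof.
  intros HF Hfx.
  assert (Hid : fpx * (e + d) = ((fpx - fpxi) * e + (fx - F)) + - ((F' - fpx) * d)).
  { subst fx. replace F with (- (F' * d)) by lra. ring. }
  rewrite <- Rabs_mult, Hid.
  eapply Rle_trans; [apply Rabs_triang |].
  eapply Rle_trans; [apply Rplus_le_compat_r, Rabs_triang |].
  rewrite Rabs_Ropp, !Rabs_mult, (Rabs_minus_sym fx F). lra.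
Qed.

Lemma inexact_residual_bound (eta F g r : R) :
  0 <= eta <= 1 -> 2 * Rabs (F - g) + r <= eta * Rabs F ->
  Rabs (F - g) + r <= eta * Rabs g.
Proof.
  intros Heta H.
  assert (HF : Rabs F <= Rabs g + Rabs (F - g)).
  { replace F with (g + (F - g)) at 1 by ring. apply Rabs_triang. }
  pose proof (Rabs_pos (F - g)). nra.
Qed.

Lemma newton_step_contraction (a k eta zeta e d F F' fx fpx fpxi : R) :
  a <> 0 -> 0 <= k < 1 -> 0 <= eta <= 1 ->
  2 * k + eta * (1 + k) <= zeta * (1 - k) ->
  F + F' * d = 0 -> fx = fpxi * e ->
  Rabs (fpx - a) <= k * Rabs a -> Rabs (fpxi - a) <= k * Rabs a ->
  2 * Rabs (F - fx) + Rabs d * Rabs (F' - fpx) <= eta * Rabs F ->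
  Rabs (e + d) <= zeta * Rabs e.
Proof.
  intros Ha Hk Heta Hkz HF Hfx Hx Hxi Hacc.
  pose proof (Rabs_pos_lt a Ha) as HM.
  pose proof (Rabs_newton_error e d F F' fx fpx fpxi HF Hfx) as Herr.
  assert (Hres : Rabs (F - fx) + Rabs d * Rabs (F' - fpx) <= eta * (Rabs fpxi * Rabs e)).
  { rewrite <- (Rabs_mult fpxi e), <- Hfx. apply (inexact_residual_bound eta F fx); lra. }
  assert (Hdiff : Rabs (fpx - fpxi) <= 2 * k * Rabs a).
  { replace (fpx - fpxi) with ((fpx - a) + - (fpxi - a)) by ring.
    eapply Rle_trans; [apply Rabs_triang |]. rewrite Rabs_Ropp. lra. }
  assert (Hup : Rabs fpxi <= (1 + k) * Rabs a).
  { replace fpxi with ((fpxi - a) + a) by ring.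
    eapply Rle_trans; [apply Rabs_triang |]. lra. }
  assert (Hlow : (1 - k) * Rabs a <= Rabs fpx).
  { pose proof (Rabs_triang_inv a (a - fpx)) as Hi.
    replace (a - (a - fpx)) with fpx in Hi by ring.
    rewrite (Rabs_minus_sym a fpx) in Hi. lra. }
  pose proof (Rabs_pos e). pose proof (Rabs_pos (e + d)).
  pose proof (Rabs_pos fpxi). pose proof (Rabs_pos (fpx - fpxi)).
  assert (Hlhs : (1 - k) * Rabs a * Rabs (e + d) <= Rabs fpx * Rabs (e + d))
    by (apply Rmult_le_compat_r; lra).
  assert (Hrhs : Rabs (fpx - fpxi) * Rabs e + eta * (Rabs fpxi * Rabs e)
                 <= (2 * k + eta * (1 + k)) * Rabs a * Rabs e).
  { assert (Rabs (fpx - fpxi) * Rabs e <= 2 * k * Rabs a * Rabs e)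
      by (apply Rmult_le_compat_r; lra).
    assert (eta * (Rabs fpxi * Rabs e) <= eta * ((1 + k) * Rabs a * Rabs e))
      by (apply Rmult_le_compat_l; [lra | apply Rmult_le_compat_r; lra]).
    lra. }
  assert (Hmargin : (2 * k + eta * (1 + k)) * Rabs a * Rabs e
                    <= (1 - k) * Rabs a * (zeta * Rabs e)).
  { replace ((1 - k) * Rabs a * (zeta * Rabs e)) with (zeta * (1 - k) * (Rabs a * Rabs e))
      by ring.
    rewrite Rmult_assoc. apply Rmult_le_compat_r; [nra | lra]. }
  apply Rmult_le_reg_l with ((1 - k) * Rabs a); [nra | lra].
Qed.

Lemma contraction_margin (eta zeta : R) :
  0 < eta -> eta < zeta ->
  exists k, 0 < k < 1 /\ 2 * k + eta * (1 + k) <= zeta * (1 - k).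
Proof.
  intros Heta Hzeta.
  exists ((zeta - eta) / (2 + eta + zeta)).
  assert (Hk : 0 < (zeta - eta) / (2 + eta + zeta)) by (apply Rdiv_lt_0_compat; lra).
  assert (Hkeq : (zeta - eta) / (2 + eta + zeta) * (2 + eta + zeta) = zeta - eta)
    by (field; lra).
  split; [split |]; nra.
Qed.

Lemma open_interval_nbhd (lo hi : option R) (x0 : R) :
  in_open_interval lo hi x0 ->
  exists r, 0 < r /\ forall x, Rabs (x - x0) <= r -> in_open_interval lo hi x.
Proof.
  intros [Hlo Hhi].
  assert (Hball : forall r x, Rabs (x - x0) <= r -> x0 - r <= x <= x0 + r).
  { intros r x Hx. pose proof (Rle_abs (x - x0)). pose proof (Rle_abs (- (x - x0))); rewrite Rabs_Ropp in *. lra. }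
  destruct lo as [a|], hi as [b|]; simpl in *.
  - exists (Rmin ((x0 - a) / 2) ((b - x0) / 2)). split; [apply Rmin_pos; lra |].
    intros x Hx. apply Hball in Hx.
    pose proof (Rmin_l ((x0 - a) / 2) ((b - x0) / 2)).
    pose proof (Rmin_r ((x0 - a) / 2) ((b - x0) / 2)). split; lra.
  - exists ((x0 - a) / 2). split; [lra |]. intros x Hx. apply Hball in Hx. split; lra.
  - exists ((b - x0) / 2). split; [lra |]. intros x Hx. apply Hball in Hx. split; lra.
  - exists 1. split; [lra | now intros].
Qed.

Lemma continuity_pt_closed_ball (g : R -> R) (x0 eps : R) :
  continuity_pt g x0 -> 0 < eps ->
  exists r, 0 < r /\ forall x, Rabs (x - x0) <= r -> Rabs (g x - g x0) <= eps.
Proof.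
  intros Hc Heps. destruct (Hc eps Heps) as [r [Hr Hball]].
  exists (r / 2). split; [lra |]. intros x Hx.
  destruct (Req_dec x0 x) as [<- | Hne].
  - rewrite Rminus_diag, Rabs_R0. lra.
  - left. apply Hball. split; [split; [exact I | exact Hne] |].
    simpl. unfold R_dist. lra.
Qed.

Lemma MVT_centered (f f' : R -> R) (x0 x : R) :
  (forall c, Rabs (c - x0) <= Rabs (x - x0) -> derivable_pt_lim f c (f' c)) ->
  exists c, Rabs (c - x0) <= Rabs (x - x0) /\ f x - f x0 = f' c * (x - x0).
Proof.
  intros Hder. destruct (Rtotal_order x x0) as [Hlt | [-> | Hgt]].
  - destruct (MVT_cor2 f f' x x0 Hlt) as [c [Hc Hrange]].
    + intros c Hc. apply Hder. rewrite !Rabs_left1 by lra. lra.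
    + exists c. split; [rewrite !Rabs_left1 by lra; lra |].
      replace (f x - f x0) with (- (f x0 - f x)) by ring. rewrite Hc. ring.
  - exists x0. split; [lra | ring].
  - destruct (MVT_cor2 f f' x0 x Hgt) as [c [Hc Hrange]].
    + intros c Hc. apply Hder. rewrite !Rabs_right by lra. lra.
    + exists c. split; [rewrite !Rabs_right by lra; lra | exact Hc].
Qed.

Lemma contraction_stays_in_ball (u : nat -> R) (l z r : R) :
  0 <= z <= 1 -> Rabs (u 0%nat - l) <= r ->
  (forall n, Rabs (u n - l) <= r -> Rabs (u (S n) - l) <= z * Rabs (u n - l)) ->
  forall n, Rabs (u n - l) <= r /\ Rabs (u (S n) - l) <= z * Rabs (u n - l).
Proof.
  intros Hz H0 Hstep.
  assert (Hball : forall n, Rabs (u n - l) <= r).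
  { induction n as [| n IH]; [exact H0 |].
    pose proof (Hstep n IH). pose proof (Rabs_pos (u n - l)). nra. }
  intros n. split; [apply Hball | apply Hstep, Hball].
Qed.

Lemma Un_cv_of_contraction (u : nat -> R) (l z : R) :
  0 <= z < 1 -> (forall n, Rabs (u (S n) - l) <= z * Rabs (u n - l)) -> Un_cv u l.
Proof.
  intros Hz Hstep.
  set (C := Rabs (u 0%nat - l) + 1).
  assert (HC : 0 < C) by (pose proof (Rabs_pos (u 0%nat - l)); unfold C; lra).
  assert (Hgeo : forall n, Rabs (u n - l) <= z ^ n * C).
  { induction n as [| n IH]; simpl; [unfold C; lra |].
    eapply Rle_trans; [apply Hstep |]. rewrite Rmult_assoc.
    apply Rmult_le_compat_l; lra. }
  intros eps Heps.
  destruct (pow_lt_1_zero z ltac:(rewrite Rabs_right; lra) (eps / C)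
              ltac:(apply Rdiv_lt_0_compat; lra)) as [N HN].
  exists N. intros n Hn. unfold R_dist.
  specialize (HN n Hn). rewrite Rabs_right in HN by (apply Rle_ge, pow_le; lra).
  apply Rmult_lt_compat_r with (r := C) in HN; [| exact HC].
  replace (eps / C * C) with eps in HN by (field; lra).
  eapply Rle_lt_trans; [apply Hgeo | exact HN].
Qed.

Theorem lemma4
  (lo hi : option R) (f f' : R -> R) (pstar eta zeta : R)
  (Hderiv : forall x, in_open_interval lo hi x -> derivable_pt_lim f x (f' x))
  (Hcont : forall x, in_open_interval lo hi x -> continuity_pt f' x)
  (Hpstar : in_open_interval lo hi pstar)
  (Hroot : f pstar = 0) (Hnz : f' pstar <> 0)
  (Heta : 0 < eta < 1) (Hzeta : eta < zeta < 1) :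
  exists eps : R, 0 < eps /\
    forall (p F F' : nat -> R),
      (forall n, F' n <> 0) ->
      (forall n, p (S n) = p n - F n / F' n) ->
      Rabs (p 0%nat - pstar) <= eps ->
      (forall n, in_open_interval lo hi (p n) ->
         2 * Rabs (F n - f (p n)) + Rabs (p (S n) - p n) * Rabs (F' n - f' (p n))
           <= eta * Rabs (F n)) ->
      (forall n, Rabs (p n - pstar) <= eps /\
                 Rabs (p (S n) - pstar) <= zeta * Rabs (p n - pstar)) /\
      Un_cv p pstar.
Proof.
  destruct (contraction_margin eta zeta) as [k [Hk Hkz]]; try lra.
  pose proof (Rabs_pos_lt _ Hnz) as Ha.
  destruct (open_interval_nbhd lo hi pstar Hpstar) as [r1 [Hr1 Hin]].
  destruct (continuity_pt_closed_ball f' pstar (k * Rabs (f' pstar)) (Hcont _ Hpstar))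
    as [r2 [Hr2 Hnear]]; [nra |].
  pose proof (Rmin_l r1 r2) as Hr1min. pose proof (Rmin_r r1 r2) as Hr2min.
  exists (Rmin r1 r2). split; [apply Rmin_pos; lra |].
  intros p F F' HF' Hrec H0 Hacc.
  assert (Hstep : forall n, Rabs (p n - pstar) <= Rmin r1 r2 ->
                  Rabs (p (S n) - pstar) <= zeta * Rabs (p n - pstar)).
  { intros n Hn.
    destruct (MVT_centered f f' pstar (p n)) as [xi [Hxi Hmvt]].
    { intros c Hc. apply Hderiv, Hin. lra. }
    replace (p (S n) - pstar) with ((p n - pstar) + (p (S n) - p n)) by ring.
    apply (newton_step_contraction (f' pstar) k eta zeta _ _ (F n) (F' n)
             (f (p n)) (f' (p n)) (f' xi)); [exact Hnz | lra | lra | exact Hkz | ..].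
    - rewrite Hrec. field. apply HF'.
    - rewrite Hroot in Hmvt. lra.
    - apply Hnear. lra.
    - apply Hnear. lra.
    - apply Hacc, Hin. lra. }
  pose proof (contraction_stays_in_ball p pstar zeta (Rmin r1 r2)
                ltac:(lra) H0 Hstep) as Hall.
  split; [exact Hall |].
  apply (Un_cv_of_contraction p pstar zeta); [lra | apply Hall].
Qed.
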